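(* Let $\mu>0$, let $a\in\left(-\frac{2\mu}{9},0\right)\cup\left(0,\frac{4\mu}{9}\right)$ be real and $s_1\in\left[\frac{2\mu}{3},\infty\right)$. Define $$F(\tilde z;s_1,a)=\frac{H(\tilde z;s_1,a)}{\beta_1(a,s_1)},\quad H(\tilde z;s_1,a)=\frac{27a^2\tilde z\,(2s_1-3a)}{27a^3\tilde z-27a^2\tilde z\,s_1-(\tilde z-1)^2s_1^3},\quad \beta_1(a,s_1)=\frac{27a^2}{s_1^3}(3a-2s_1).$$ Then for all $|\tilde z|<1$, $$\frac{|\tilde z|}{(1+|\tilde z|)^2}\le\left|F(\tilde z;s_1,a)\right|\le\frac{|\tilde z|}{(1-|\tilde z|)^2}.$$ *)

From Stdlib Require Import Reals.
From Coquelicot Require Import Coquelicot.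
Open Scope R_scope.

Definition beta1 (a s1 : R) : R := 27 * a ^ 2 / s1 ^ 3 * (3 * a - 2 * s1).

Definition H (z : C) (s1 a : R) : C :=
  Cdiv (Cmult (RtoC (27 * a ^ 2 * (2 * s1 - 3 * a))) z)
       (Cminus (Cminus (Cmult (RtoC (27 * a ^ 3)) z)
                       (Cmult (RtoC (27 * a ^ 2 * s1)) z))
               (Cmult (Cmult (Cminus z 1) (Cminus z 1)) (RtoC (s1 ^ 3)))).

Definition F (z : C) (s1 a : R) : C := Cdiv (H z s1 a) (RtoC (beta1 a s1)).

(** Clearing denominators, [F z = z / (z^2 - b z + 1)] with the real
    parameter [b = 2 - 27 a^2 (s1 - a) / s1^3].  The hypotheses on [a] and
    [s1] give [-2 <= b <= 2] (because [4 s1^3 - 27 a^2 (s1 - a) =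
    (2 s1 - 3 a)^2 (3 a + s1)]), so the quadratic factors as [(z - w)(z - conj w)]
    with [|w| = 1].  For [|z| < 1] each factor has modulus between [1 - |z|] and
    [1 + |z|], which are exactly the two Koebe bounds. *)

From Stdlib Require Import Reals Lra Psatz.
From Coquelicot Require Import Coquelicot.
Open Scope R_scope.

Lemma RtoC_neq_0 (x : R) : x <> 0 -> RtoC x <> 0%C.
Proof. intros hx e. apply hx. exact (f_equal fst e). Qed.

Lemma Cdiv_0_r (x : C) : (x / 0)%C = 0%C.
Proof.
  unfold Cdiv, Cinv; simpl.
  apply injective_projections; simpl; unfold Rdiv; ring.
Qed.

Lemma Cmod_sub_bounds (z v : C) :
  Cmod v - Cmod z <= Cmod (z - v) <= Cmod z + Cmod v.
Proof.
  split.
  - replace v with (- (z - v) + z)%C at 1 by ring.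
    pose proof (Cmod_triangle (- (z - v)) z) as T.
    rewrite Cmod_opp in T. lra.
  - pose proof (Cmod_triangle z (- v)) as T.
    rewrite Cmod_opp in T. exact T.
Qed.

Lemma Cmod_div_unit_roots_bounds (v v' z : C) :
  Cmod v = 1 -> Cmod v' = 1 -> Cmod z < 1 ->
  Cmod z / (1 + Cmod z) ^ 2 <= Cmod (z / ((z - v) * (z - v'))) <=
  Cmod z / (1 - Cmod z) ^ 2.
Proof.
  intros hv hv' hz.
  pose proof (Cmod_ge_0 z) as hz0.
  pose proof (Cmod_sub_bounds z v) as [lo up].
  pose proof (Cmod_sub_bounds z v') as [lo' up'].
  rewrite hv in lo, up. rewrite hv' in lo', up'.
  assert (hlo : (1 - Cmod z) ^ 2 <= Cmod (z - v) * Cmod (z - v')).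
  { replace ((1 - Cmod z) ^ 2) with ((1 - Cmod z) * (1 - Cmod z)) by ring.
    apply Rmult_le_compat; lra. }
  assert (hup : Cmod (z - v) * Cmod (z - v') <= (1 + Cmod z) ^ 2).
  { replace ((1 + Cmod z) ^ 2) with ((1 + Cmod z) * (1 + Cmod z)) by ring.
    apply Rmult_le_compat; try apply Cmod_ge_0; lra. }
  assert (hpos : 0 < Cmod (z - v) * Cmod (z - v')) by nra.
  assert (hnz : ((z - v) * (z - v'))%C <> 0%C).
  { apply Cmod_gt_0. rewrite Cmod_mult. exact hpos. }
  rewrite Cmod_div, Cmod_mult by exact hnz.
  unfold Rdiv. split; apply Rmult_le_compat_l; try exact hz0;
    apply Rinv_le_contravar; auto; apply pow_lt; lra.
Qed.

Lemma real_quadratic_unit_roots (b : R) :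
  -2 <= b <= 2 ->
  exists w : C, Cmod w = 1 /\
    forall z : C, (z * z - RtoC b * z + 1)%C = ((z - w) * (z - Cconj w))%C.
Proof.
  intros hb.
  assert (hk : 0 <= 1 - b ^ 2 / 4) by nra.
  set (k := sqrt (1 - b ^ 2 / 4)).
  assert (hkk : k * k = 1 - b ^ 2 / 4) by apply (sqrt_sqrt _ hk).
  exists (b / 2, k). split.
  - unfold Cmod; simpl fst; simpl snd.
    replace ((b / 2) ^ 2 + k ^ 2) with 1 by nra. apply sqrt_1.
  - intros [x y]. unfold Cconj, Cminus, Cmult, Cplus, Copp, RtoC; simpl.
    apply injective_projections; simpl; nra.
Qed.

Definition F_param (a s1 : R) : R := 2 - 27 * a ^ 2 * (s1 - a) / s1 ^ 3.

Lemma F_param_bounds (a s1 : R) :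
  0 < s1 -> a <= s1 -> 0 <= 3 * a + s1 -> -2 <= F_param a s1 <= 2.
Proof.
  intros hs has h3.
  assert (hs3 : 0 < / s1 ^ 3) by (apply Rinv_0_lt_compat, pow_lt; lra).
  assert (lower : F_param a s1 + 2 = (2 * s1 - 3 * a) ^ 2 * (3 * a + s1) / s1 ^ 3).
  { unfold F_param. field. lra. }
  assert (0 <= (2 * s1 - 3 * a) ^ 2 * (3 * a + s1) / s1 ^ 3).
  { unfold Rdiv. apply Rmult_le_pos; [apply Rmult_le_pos; [apply pow2_ge_0 | lra] | lra]. }
  assert (0 <= 27 * a ^ 2 * (s1 - a) / s1 ^ 3).
  { unfold Rdiv. apply Rmult_le_pos; [apply Rmult_le_pos; [nra | lra] | lra]. }
  unfold F_param in *. lra.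
Qed.

Lemma H_denominator_eq (a s1 : R) (z : C) :
  s1 <> 0 ->
  (RtoC (27 * a ^ 3) * z - RtoC (27 * a ^ 2 * s1) * z
     - (z - 1) * (z - 1) * RtoC (s1 ^ 3))%C =
  (RtoC (- s1 ^ 3) * (z * z - RtoC (F_param a s1) * z + 1))%C.
Proof.
  intros hs. unfold F_param.
  rewrite RtoC_minus, RtoC_div by (apply pow_nonzero; exact hs).
  repeat rewrite ?RtoC_mult, ?RtoC_minus, ?RtoC_pow, ?RtoC_opp.
  field. apply RtoC_neq_0. exact hs.
Qed.

(** Both sides vanish when the quadratic does, because [Cinv 0 = 0]. *)
Lemma F_eq (a s1 : R) (z : C) :
  a <> 0 -> s1 <> 0 -> 2 * s1 - 3 * a <> 0 ->
  F z s1 a = (z / (z * z - RtoC (F_param a s1) * z + 1))%C.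
Proof.
  intros ha hs hb.
  unfold F, H. rewrite H_denominator_eq by exact hs.
  set (Q := (z * z - RtoC (F_param a s1) * z + 1)%C).
  assert (hs3 : - s1 ^ 3 <> 0) by (apply Ropp_neq_0_compat, pow_nonzero; exact hs).
  assert (hbeta : beta1 a s1 <> 0).
  { unfold beta1, Rdiv.
    repeat apply Rmult_integral_contrapositive_currified;
      try apply Rinv_neq_0_compat; try apply pow_nonzero; lra. }
  assert (hnum : 27 * a ^ 2 * (2 * s1 - 3 * a) = - s1 ^ 3 * beta1 a s1).
  { unfold beta1. field. exact hs. }
  destruct (Ceq_dec Q 0) as [hQ | hQ].
  - rewrite hQ, Cmult_0_r, !Cdiv_0_r. unfold Cdiv. ring.
  - rewrite hnum, RtoC_mult.
    field. split; [exact hQ | split; apply RtoC_neq_0; assumption].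
Qed.

Theorem corollary2 (mu a s1 : R) (z : C) :
  0 < mu ->
  ((- (2 * mu / 9) < a /\ a < 0) \/ (0 < a /\ a < 4 * mu / 9)) ->
  2 * mu / 3 <= s1 ->
  Cmod z < 1 ->
  Cmod z / (1 + Cmod z) ^ 2 <= Cmod (F z s1 a) /\
  Cmod (F z s1 a) <= Cmod z / (1 - Cmod z) ^ 2.
Proof.
  intros hmu ha hs hz.
  assert (hb : -2 <= F_param a s1 <= 2) by (apply F_param_bounds; lra).
  destruct (real_quadratic_unit_roots _ hb) as [w [hw hfactor]].
  rewrite F_eq, hfactor by lra.
  apply Cmod_div_unit_roots_bounds; [exact hw | rewrite Cmod_conj; exact hw | exact hz].
Qed.
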